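(* Let $|A|\ge2$, let $\mathcal F\subseteq\mathcal O(A)$ be a conservative clone with $\mathrm r(\mathcal F)=r\ge3$. Then there exist a Post class $P\in\{O_1,D_1,D_2,L_4\}$ and a surjective map $\tau\colon\mathcal F\to P$ such that for every $B\in[A]^2$, every bijection $\sigma\colon B\to\{0,1\}$, every $n$, every $f\in\mathcal F_{[n]}$ and every $\mathbf a\in B^n$, $$f(\mathbf a)=\sigma^{-1}\big(\tau(f)(\sigma(\mathbf a))\big),$$ where $\sigma(\mathbf a)$ is applied componentwise. Moreover, if $r\ge4$, then $P=O_1$ and every $f\in\mathcal F_{[n]}$ coincides with some projection $e^n_i$ on the set $A^n_{<r}$.
   Context: $\mathcal O(A)=\bigcup_{n<\omega}A^{A^n}$; $\mathcal F_{[n]}=\mathcal F\cap A^{A^n}$. $\mathrm{ran}\,\mathbf a$ is the set of entries of $\mathbf a\in A^n$; $A^n_{<r}=\{\mathbf a\in A^n: |\mathrm{ran}\,\mathbf a|<r\}$; $[A]^2$ the 2-element subsets of $A$. A clone with carrier $A$ is a subset of $\mathcal O(A)$ containing all projections $e^n_i(a_0\dots a_{n-1})=a_i$ and closed under composition. $f$ is conservative if $f(\mathbf a)\in\mathrm{ran}\,\mathbf a$ for all $\mathbf a$; a clone is conservative if all its members are. $\mathrm r(\mathcal F)$ is the least $r$ such that $\mathcal F$ contains an $r$-ary function that is not a projection ($\mathrm r(\mathcal F)=\omega$ if $\mathcal F$ consists of projections only). Post classes are clones on $\{0,1\}$: a Boolean function $g$ is self-dual if $g(1-x_0,\dots,1-x_{n-1})=1-g(x_0,\dots,x_{n-1})$;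 $O_1$ is the set of all Boolean projections; $D_1$ is the set of all self-dual Boolean functions $g$ with $g(0,\dots,0)=0$; $D_2$ is the set of all self-dual monotone Boolean functions; $L_4$ is the clone generated by $x\oplus y\oplus z$ (the functions $x_{i_1}\oplus\dots\oplus x_{i_k}$ with $k$ odd). *)

From mathcomp Require Import all_boot.
From Stdlib Require Import List.
Set Implicit Arguments. Unset Strict Implicit. Unset Printing Implicit Defensive.

Definition op (A : Type) (n : nat) : Type := ('I_n -> A) -> A.
Definition boolop (n : nat) : Type := ('I_n -> bool) -> bool.

(* a family of operations, i.e. a subset of O(A), given arity-wise: F n = F_[n] *)
Definition opset (A : Type) : Type := forall n : nat, op A n -> Prop.

Definition is_projection (A : Type) (n : nat) (f : op A n) : Prop :=
  exists i : 'I_n, forall a : 'I_n -> A, f a = a i.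

Definition is_clone (A : Type) (F : opset A) : Prop :=
  (forall n (i : 'I_n), F n (fun a => a i)) /\
  (forall m n (f : op A m) (g : 'I_m -> op A n),
      F m f -> (forall j, F n (g j)) ->
      F n (fun a => f (fun j => g j a))).

Definition conservative (A : Type) (F : opset A) : Prop :=
  forall n (f : op A n) (a : 'I_n -> A), F n f -> exists i : 'I_n, f a = a i.

(* r_ge F r  <->  r(F) >= r, i.e. every member of F of arity < r is a projection.
   (r(F) = omega iff r_ge F r for all r.) *)
Definition r_ge (A : Type) (F : opset A) (r : nat) : Prop :=
  forall m (f : op A m), m < r -> F m f -> is_projection f.

(* a in A^n_{<r}: |ran a| < r *)
Definition small_range (A : Type) (n r : nat) (a : 'I_n -> A) : Prop :=
  exists s : list A, (length s < r)%coq_nat /\ forall i, List.In (a i) s.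

Definition self_dual n (g : boolop n) : Prop :=
  forall x : 'I_n -> bool, g (fun i => ~~ x i) = ~~ g x.

Definition monotone n (g : boolop n) : Prop :=
  forall x y : 'I_n -> bool, (forall i, x i ==> y i) -> g x ==> g y.

Definition O1 : forall n, boolop n -> Prop :=
  fun n g => exists i : 'I_n, forall x, g x = x i.

Definition D1 : forall n, boolop n -> Prop :=
  fun n g => self_dual g /\ g (fun _ => false) = false.

Definition D2 : forall n, boolop n -> Prop :=
  fun n g => self_dual g /\ monotone g.

Definition L4 : forall n, boolop n -> Prop :=
  fun n g => exists S : {set 'I_n}, odd #|S| /\
               forall x, g x = \big[addb/false]_(i in S) x i.

From mathcomp Require Import all_boot.
From Stdlib Require Import ClassicalEpsilon FunctionalExtensionality.
Set Implicit Arguments. Unset Strict Implicit. Unset Printing Implicit Defensive.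

(* Since r(F) >= 3, every binary minor of f in F is a projection, so on any two-element set
   {b0, b1} the operation f acts as a Boolean function tau(f) that does not depend on the pair.
   Exchanging b0 and b1 shows that tau(f) is self-dual, and conservativity gives
   tau(f)(0,...,0) = 0, so tau maps F onto a clone below D1.  Such a clone is O1, D2, L4 or D1
   according to which of maj(x,y,z) and x+y+z it contains: without majority every member is
   additive on disjoint supports, hence affine; without x+y+z every member is monotone; and a
   function of arity >= 3 is recovered from its identification minors by majority (monotone
   case) or by the conditional "if x0 = x1 then x2 else x3" (general case).  If r(F) >= 4 the
   ternary functions majority and x+y+z are excluded, so tau(F) = O1, and a tuple with fewer
   than r distinct entries factors f through a minor of arity < r, which is a projection. *)

Definition o0 {p} : 'I_p.+1 := ord0.
Definition o1 {p} : 'I_p.+2 := Ordinal (isT : 1 < p.+2).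
Definition o2 {p} : 'I_p.+3 := Ordinal (isT : 2 < p.+3).

Definition vec3 {X : Type} (a b c : X) (j : 'I_3) : X :=
  match val j with 0 => a | 1 => b | _ => c end.
Definition vec4 {X : Type} (a b c d : X) (j : 'I_4) : X :=
  match val j with 0 => a | 1 => b | 2 => c | _ => d end.

Definition maj (a b c : bool) := [|| a && b, b && c | a && c].
Definition maj3 : boolop 3 := fun y => maj (y o0) (y o1) (y o2).
Definition xor3 : boolop 3 := fun y => y o0 (+) y o1 (+) y o2.
Definition maj3n : boolop 3 := fun y => maj (y o0) (y o1) (~~ y o2).
Definition cond4 : boolop 4 := fun y => if y o0 == y o1 then y o2 else y ord_max.

Definition identify n (i j : 'I_n) (g : boolop n) : boolop n :=
  fun x => g (fun k => if k == j then x i else x k).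

Definition partition3 n (p q r : 'I_n -> bool) :=
  forall k, [|| p k && ~~ q k && ~~ r k, ~~ p k && q k && ~~ r k | ~~ p k && ~~ q k && r k].

Lemma vec3_eta {X} (y : 'I_3 -> X) : y = vec3 (y o0) (y o1) (y o2).
Proof.
by apply: functional_extensionality => -[[|[|[|m]]] Hm] //=; congr y; apply: val_inj.
Qed.

Lemma vec3_neg a b c : (fun i => ~~ vec3 a b c i) = vec3 (~~ a) (~~ b) (~~ c).
Proof. by apply: functional_extensionality => -[[|[|[|m]]] Hm]. Qed.

Lemma vec3_const (c : bool) : vec3 c c c = fun _ => c.
Proof. by apply: functional_extensionality => -[[|[|[|m]]] Hm]. Qed.

Lemma D1_const n (g : boolop n) (c : bool) : D1 g -> g (fun _ => c) = c.
Proof.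
move=> [sd g0]; case: c => //.
by have := sd (fun _ => false) => /= ->; rewrite g0.
Qed.

Lemma D1_ternary_eq (h h' : boolop 3) : D1 h -> D1 h' ->
  h (vec3 true false false) = h' (vec3 true false false) ->
  h (vec3 false true false) = h' (vec3 false true false) ->
  h (vec3 false false true) = h' (vec3 false false true) ->
  h =1 h'.
Proof.
move=> Dh Dh' e0 e1 e2 y.
have dual k a b c : D1 k -> k (vec3 (~~ a) (~~ b) (~~ c)) = ~~ k (vec3 a b c).
  by move=> [sk _]; rewrite -vec3_neg sk.
rewrite (vec3_eta y).
case: (y o0); case: (y o1); case: (y o2);
  rewrite ?vec3_const ?D1_const ?e0 ?e1 ?e2 //.
- by rewrite -[true]/(~~ false) -[false]/(~~ true) !dual // e2.
- by rewrite -[true]/(~~ false) -[false]/(~~ true) !dual // e1.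
- by rewrite -[true]/(~~ false) -[false]/(~~ true) !dual // e0.
Qed.

Lemma maj3_D1 : D1 maj3.
Proof. by split => [x|] //; rewrite /maj3 /maj; case: (x o0); case: (x o1); case: (x o2). Qed.
Lemma xor3_D1 : D1 xor3.
Proof. by split => [x|] //; rewrite /xor3; case: (x o0); case: (x o1); case: (x o2). Qed.
Lemma maj3n_D1 : D1 maj3n.
Proof. by split => [x|] //; rewrite /maj3n /maj; case: (x o0); case: (x o1); case: (x o2). Qed.

Lemma identify_id n (g : boolop n) i j x : x i = x j -> identify i j g x = g x.
Proof. by move=> xij; congr g; apply: functional_extensionality => k; case: eqP => [->|]. Qed.

Lemma cond4E (a b c d : bool) : cond4 (vec4 a b c d) = if a == b then c else d.
Proof. by []. Qed.

Lemma identify_cond4 p (g : boolop p.+3) x :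
  g x = cond4 (vec4 (x o0) (x o1) (identify o0 o1 g x)
                    (cond4 (vec4 (x o1) (x o2) (identify o1 o2 g x) (identify o2 o0 g x)))).
Proof.
have id i j := @identify_id _ g i j x; rewrite !cond4E.
by case e0: (x o0); case e1: (x o1); case e2: (x o2) => /=;
   rewrite ?(id o0 o1) ?(id o1 o2) ?(id o2 o0) ?e0 ?e1 ?e2.
Qed.

Lemma monotone_identify_maj p (g : boolop p.+3) x : monotone g ->
  g x = maj (identify o0 o1 g x) (identify o1 o2 g x) (identify o2 o0 g x).
Proof.
move=> mon_g.
have up i j : (x j ==> x i) ==> (g x ==> identify i j g x).
  by apply/implyP => xji; apply: mon_g => k; case: eqP => [->|]; rewrite ?implybb.
have down i j : (x i ==> x j) ==> (identify i j g x ==> g x).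
  by apply/implyP => xij; apply: mon_g => k; case: eqP => [->|]; rewrite ?implybb.
move: (up o0 o1) (down o0 o1) (up o1 o2) (down o1 o2) (up o2 o0) (down o2 o0).
by rewrite /maj; case: (x o0) (x o1) (x o2) (g x) => -[] [] [];
  case: (identify o0 o1 g x) (identify o1 o2 g x) (identify o2 o0 g x) => -[] [].
Qed.

Lemma O1_of_D1_small n (g : boolop n) : n <= 2 -> D1 g -> O1 g.
Proof.
move=> n_le2 Dg; have [sd _] := Dg.
have const (x : 'I_n -> bool) c : (forall k, x k = c) -> g x = c.
  by move=> xc; rewrite -(D1_const c Dg); congr g; apply: functional_extensionality.
case: n n_le2 g Dg sd const => [|[|[|//]]] _ g Dg sd const.
- by have := const (fun _ => true) true (fun=> erefl); rewrite (const _ false) // => -[].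
- by exists ord0 => x; apply: const => k; rewrite (ord1 k).
- have ord2 (k : 'I_2) : k = ord0 \/ k = ord_max.
    by case: k => -[|[|//]] ?; [left | right]; apply: val_inj.
  pose u (k : 'I_2) := k == ord0.
  exists (if g u then ord0 else ord_max) => x.
  have [x0 | x0] := boolP (x ord0 == x ord_max).
    have xc k : x k = x ord0 by case: (ord2 k) => ->; rewrite ?(eqP x0).
    by rewrite (const _ _ xc) xc.
  have [->|->] : x = u \/ x = (fun k => ~~ u k).
    move: x0; case e0: (x ord0); case e1: (x ord_max) => //= _; [left | right];
      by apply: functional_extensionality => k; case: (ord2 k) => ->; rewrite ?e0 ?e1.
  + by case: (g u).
  + by rewrite sd; case: (g u).
Qed.

Lemma D1_of_D2 n (g : boolop n) : D2 g -> D1 g.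
Proof.
move=> [sd mon]; split => //.
have := mon (fun _ => false) (fun _ => true) (fun=> erefl).
by have := sd (fun _ => false) => /= ->; case: (g _).
Qed.

Lemma partition3_rot n (p q r : 'I_n -> bool) : partition3 p q r -> partition3 q r p.
Proof. by move=> H k; move: (H k); case: (p k); case: (q k); case: (r k). Qed.

Lemma addb_big_true (I : finType) (S : {set I}) : \big[addb/false]_(k in S) true = odd #|S|.
Proof. by rewrite big_const; elim: #|S| => //= m ->; case: (odd m). Qed.

Lemma addb_big_pred1 (I : finType) (S : {set I}) k :
  \big[addb/false]_(i in S) (i == k) = (k \in S).
Proof.
case Sk: (k \in S); first by rewrite (big_setD1 _ Sk) eqxx big1 // => i /setD1P [/negbTE].
by rewrite big1 // => i Si; apply: contraFF Sk => /eqP <-.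
Qed.

Definition disjoint_additive n (g : boolop n) :=
  forall p q : 'I_n -> bool, (forall k, p k -> ~~ q k) -> g (fun k => p k || q k) = g p (+) g q.

Lemma additive_sum_pred1 n (g : boolop n) :
  g (fun _ => false) = false -> disjoint_additive g ->
  forall X : {set 'I_n}, g (mem X) = \big[addb/false]_(k in X) g (pred1 k).
Proof.
move=> g0 gD X; elim: {X}_.+1 {-2}X (ltnSn #|X|) => // N IH X ltXN.
have [->|[i Xi]] := set_0Vmem X.
  by rewrite big_set0 -g0; congr g; apply: functional_extensionality => k; rewrite /= inE.
have ltXiN : #|X :\ i| < N by rewrite -ltnS (leq_trans _ ltXN) // (cardsD1 i X) Xi.
rewrite (big_setD1 _ Xi) -(IH _ ltXiN) /=.
rewrite addbC -gD => [|k]; last by rewrite /= in_setD1 => /andP [].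
congr g; apply: functional_extensionality => k /=; rewrite in_setD1.
by case: (k =P i) => [->|]; rewrite ?Xi ?orbT ?orbF.
Qed.

Lemma L4_of_additive n (g : boolop n) : D1 g -> disjoint_additive g -> L4 g.
Proof.
move=> Dg gD; have g0 := D1_const false Dg.
pose S := [set k | g (pred1 k)].
have gS x : g x = \big[addb/false]_(i in S) x i.
  have -> : x = mem [set k | x k] by apply: functional_extensionality => k; rewrite /= inE.
  rewrite (additive_sum_pred1 g0 gD) big_mkcond [RHS]big_mkcond; apply: eq_bigr => k _.
  by rewrite !inE; case: (x k); case: (g _).
by exists S; split => //; rewrite -addb_big_true -gS D1_const.
Qed.

Lemma maj3_not_O1 : ~ O1 maj3.
Proof.
case=> -[[|[|[|//]]] ?] maj3i.
- by have := maj3i (vec3 true false false).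
- by have := maj3i (vec3 false true false).
- by have := maj3i (vec3 false false true).
Qed.

Lemma xor3_not_O1 : ~ O1 xor3.
Proof.
case=> -[[|[|[|//]]] ?] xor3i.
- by have := xor3i (vec3 true true false).
- by have := xor3i (vec3 true true false).
- by have := xor3i (vec3 false true true).
Qed.

Section BooleanCloneBelowD1.

Variable T : forall n, boolop n -> Prop.
Hypothesis T_proj : forall n (i : 'I_n), T (fun x => x i).
Hypothesis T_comp : forall m n (f : boolop m) (g : 'I_m -> boolop n),
  T f -> (forall j, T (g j)) -> T (fun x => f (fun j => g j x)).
Hypothesis T_ext : forall n (g g' : boolop n), T g -> g =1 g' -> T g'.
Hypothesis T_D1 : forall n (g : boolop n), T g -> D1 g.

Lemma T_minor n m (g : boolop n) (psi : 'I_n -> 'I_m) :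
  T g -> T (fun y => g (fun k => y (psi k))).
Proof. by move=> Tg; apply: T_comp. Qed.

Lemma T_comp3 n (f : boolop 3) (g0 g1 g2 : boolop n) :
  T f -> T g0 -> T g1 -> T g2 -> T (fun x => f (vec3 (g0 x) (g1 x) (g2 x))).
Proof.
move=> Tf T0 T1 T2; apply: T_ext (T_comp (g := vec3 g0 g1 g2) Tf _) _.
  by move=> -[[|[|[|m]]] Hm].
by move=> x; congr f; apply: functional_extensionality => -[[|[|[|m]]] Hm].
Qed.

Lemma T_comp4 n (f : boolop 4) (g0 g1 g2 g3 : boolop n) :
  T f -> T g0 -> T g1 -> T g2 -> T g3 ->
  T (fun x => f (vec4 (g0 x) (g1 x) (g2 x) (g3 x))).
Proof.
move=> Tf T0 T1 T2 T3; apply: T_ext (T_comp (g := vec4 g0 g1 g2 g3) Tf _) _.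
  by move=> -[[|[|[|[|m]]]] Hm].
by move=> x; congr f; apply: functional_extensionality => -[[|[|[|[|m]]]] Hm].
Qed.

Lemma xor3_of_maj3n : T maj3n -> T xor3.
Proof.
move=> Tm.
have Tm' : T (fun x : 'I_3 -> bool => maj3n (vec3 (x o0) (x o2) (x o1))) by apply: T_comp3.
apply: T_ext (T_comp3 Tm Tm Tm' (T_proj o0)) _ => x.
by rewrite /maj3n /xor3 /maj /=; case: (x o0); case: (x o1); case: (x o2).
Qed.

Lemma maj3_of_maj3n : T maj3n -> T maj3.
Proof.
move=> Tm; apply: T_ext (T_comp3 Tm (T_proj o0) (T_proj o1) (xor3_of_maj3n Tm)) _ => x.
by rewrite /maj3n /xor3 /maj3 /maj /=; case: (x o0); case: (x o1); case: (x o2).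
Qed.

Lemma cond4_of_maj3_xor3 : T maj3 -> T xor3 -> T cond4.
Proof.
move=> Tm Tx.
have Tx' : T (fun x : 'I_4 -> bool => xor3 (vec3 (x o0) (x o1) (x o2))) by apply: T_comp3.
apply: T_ext (T_comp3 Tm (T_proj o2) (T_proj ord_max) Tx') _ => x.
rewrite /cond4 /xor3 /maj3 /maj /=.
by case: (x o0); case: (x o1); case: (x o2); case: (x ord_max).
Qed.

(* Collapsing the blocks of a partition of the variables gives a ternary member of T, which by
   D1_ternary_eq is determined by the values of g at the three block indicators. *)
Lemma partition3_minor n (g : boolop n) p q r : T g -> partition3 p q r ->
  [/\ (~~ g p && ~~ g q && ~~ g r -> T maj3),
      (g p && g q && g r -> T xor3) &
      (g p && g q && ~~ g r -> T maj3n)].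
Proof.
move=> Tg Hpqr.
pose h : boolop 3 := fun y => g (fun k => y (if p k then o0 else if q k then o1 else o2)).
have Th : T h by apply: T_minor.
have h_block a b c (s : 'I_n -> bool) :
    (forall k, (if p k then a else if q k then b else c) = s k) -> h (vec3 a b c) = g s.
  move=> es; rewrite /h; congr g; apply: functional_extensionality => k.
  by rewrite -es; case: (p k); case: (q k).
have [hp hq hr] : [/\ h (vec3 true false false) = g p, h (vec3 false true false) = g q
                   & h (vec3 false false true) = g r].
  by split; apply: h_block => k; move: (Hpqr k); case: (p k); case: (q k); case: (r k).
have ternary (k : boolop 3) : D1 k -> k (vec3 true false false) = g p ->
    k (vec3 false true false) = g q -> k (vec3 false false true) = g r -> T k.
  move=> Dk kp kq kr; apply: (T_ext Th).
  by apply: D1_ternary_eq; rewrite ?hp ?hq ?hr ?kp ?kq ?kr //; apply: T_D1.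
split.
- move=> /andP[/andP[/negbTE gp /negbTE gq] /negbTE gr].
  by apply: ternary maj3_D1 _ _ _; rewrite ?gp ?gq ?gr.
- move=> /andP[/andP[gp gq] gr].
  by apply: ternary xor3_D1 _ _ _; rewrite ?gp ?gq ?gr.
- move=> /andP[/andP[gp gq] /negbTE gr].
  by apply: ternary maj3n_D1 _ _ _; rewrite ?gp ?gq ?gr.
Qed.

Lemma partition3_patterns n (g : boolop n) p q r : T g -> partition3 p q r ->
  [/\ (~~ g p && ~~ g q && ~~ g r -> T maj3),
      (g p && g q && g r -> T xor3) &
      ((g p + g q + g r == 2)%N -> T maj3n)].
Proof.
move=> Tg pqr; have [maj xor m1] := partition3_minor Tg pqr.
have [_ _ m2] := partition3_minor Tg (partition3_rot pqr).
have [_ _ m3] := partition3_minor Tg (partition3_rot (partition3_rot pqr)).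
split => //; move: m1 m2 m3.
by case: (g p); case: (g q); case: (g r) => //= ? ? ?; auto.
Qed.

Lemma affine_of_no_maj3 n (g : boolop n) : ~ T maj3 -> T g -> L4 g.
Proof.
move=> Nmaj Tg; have Dg := T_D1 Tg; apply: L4_of_additive => // p q disj.
have pqr : partition3 p q (fun k => ~~ (p k || q k)).
  by move=> k; case: (p k) (disj k); case: (q k) => // /(_ erefl).
have [maj _ m] := partition3_patterns Tg pqr.
have Nm : ~ T maj3n by move/maj3_of_maj3n.
have [sd _] := Dg; have := sd (fun k => p k || q k) => /= gc; rewrite gc in maj m.
by move: maj m; case: (g p); case: (g q); case: (g _) => //= ? ?; exfalso; auto.
Qed.

Lemma O1_of_no_maj3_xor3 n (g : boolop n) : ~ T maj3 -> ~ T xor3 -> T g -> O1 g.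
Proof.
move=> Nmaj Nxor Tg; have [S [oddS gS]] := affine_of_no_maj3 Nmaj Tg.
have Nm : ~ T maj3n by move/xor3_of_maj3n.
suff /cards1P [i S1] : #|S| == 1 by exists i => x; rewrite gS S1 big_set1.
suff : #|S| <= 1 by move: oddS; case: #|S| => [|[|]].
rewrite leqNgt; apply/negP => /card_gt1P [i [j [Si Sj ij]]].
have pqr : partition3 (pred1 i) (pred1 j) (fun k => (k != i) && (k != j)).
  move=> k /=; case: (k =P i) => [ki|_]; case: (k =P j) => [kj|_] //.
  by rewrite -ki -kj eqxx in ij.
have [_ xor m] := partition3_patterns Tg pqr.
have [gi gj] : g (pred1 i) /\ g (pred1 j) by rewrite !gS !addb_big_pred1.
by move: xor m; rewrite gi gj /=; case: (g _) => /= ? ?; auto.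
Qed.

Lemma monotone_of_no_xor3 n (g : boolop n) : ~ T xor3 -> T g -> monotone g.
Proof.
move=> Nxor Tg x y le_xy; have [sd _] := T_D1 Tg.
have Nm : ~ T maj3n by move/xor3_of_maj3n.
case gx: (g x) => //=; case gy: (g y) => //; exfalso.
have pqr : partition3 x (fun k => y k && ~~ x k) (fun k => ~~ y k).
  by move=> k; move: (le_xy k); case: (x k); case: (y k).
have [_ xor m] := partition3_patterns Tg pqr.
have := sd y => /= gny; rewrite gny gx gy /= in xor m.
by move: xor m; case: (g _) => /= ? ?; auto.
Qed.

Lemma T_O1 n (g : boolop n) : O1 g -> T g.
Proof. by move=> [i gi]; apply: T_ext (T_proj i) _ => x; rewrite gi. Qed.

Lemma T_L4_of_xor3 n (g : boolop n) : T xor3 -> L4 g -> T g.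
Proof.
move=> Tx [S [oddS gS]].
suff TS : T (fun x : 'I_n -> bool => \big[addb/false]_(i in S) x i).
  by apply: T_ext TS _ => x; rewrite gS.
elim: {S}_.+1 {-2}S (ltnSn #|S|) oddS {gS} => // N IH S ltSN oddS.
have [i Si] : exists i, i \in S by apply/set0Pn; apply: contraTneq oddS => ->; rewrite cards0.
have [Si0|[j Sij]] := set_0Vmem (S :\ i).
  by apply: T_ext (T_proj i) _ => x; rewrite (big_setD1 _ Si) Si0 big_set0 /= addbF.
have cardS : #|S| = (#|S :\ i :\ j|).+2 by rewrite (cardsD1 i S) Si (cardsD1 j (S :\ i)) Sij.
have TSij : T (fun x => \big[addb/false]_(k in S :\ i :\ j) x k).
  by apply: IH; move: ltSN oddS; rewrite cardS ltnS => /ltnW //=; rewrite negbK.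
apply: T_ext (T_comp3 Tx (T_proj i) (T_proj j) TSij) _ => x.
by rewrite /xor3 /= (big_setD1 _ Si) (big_setD1 _ Sij) /= addbA.
Qed.

Lemma T_of_identifications (K : forall n, boolop n -> Prop) :
  (forall n m (g : boolop n) (psi : 'I_n -> 'I_m),
     K n g -> K m (fun y => g (fun k => y (psi k)))) ->
  (forall n (g : boolop n), n <= 2 -> K n g -> T g) ->
  (forall p (g : boolop p.+3), K _ g -> (forall i j, i != j -> T (identify i j g)) -> T g) ->
  forall n (g : boolop n), K n g -> T g.
Proof.
move=> K_minor K_small K_identify n.
elim: n.+1 {-2}n (ltnSn n) => // N IH [|[|[|p]]] ltpN g Kg; try exact: K_small.
apply: K_identify => // i j ij.
(* identifying x_j with x_i is the minor along [k |-> if k == j then i else k], which avoids j *)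
pose psi k := odflt ord0 (unlift j (if k == j then i else k)).
have psiK k : lift j (psi k) = if k == j then i else k.
  have avoid_j : (if k == j then i else k) != j.
    by case: (k =P j) => [_|/eqP //]; exact: ij.
  by rewrite /psi; case: unliftP avoid_j => [l -> // | ->]; rewrite eqxx.
have Tg' : T (fun y => g (fun k => y (psi k))) by apply: IH => //; apply: K_minor.
apply: T_ext (T_minor (fun l => lift j l) Tg') _ => x.
rewrite /identify; congr g; apply: functional_extensionality => k.
by rewrite psiK; case: (k == j).
Qed.

Lemma T_D2_of_maj3 n (g : boolop n) : T maj3 -> D2 g -> T g.
Proof.
move=> Tm; apply: T_of_identifications
  => [{}n m {}g psi [sd mon] | {}n {}g le_n2 Dg | p {}g Dg Tid].
- by split => [y | x y xy]; [apply: sd | apply: mon => k; apply: xy].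
- by apply/T_O1/O1_of_D1_small/D1_of_D2.
- apply: T_ext (T_comp3 Tm (Tid o0 o1 isT) (Tid o1 o2 isT) (Tid o2 o0 isT)) _ => x.
  by rewrite (monotone_identify_maj x (proj2 Dg)).
Qed.

Lemma T_D1_of_cond4 n (g : boolop n) : T cond4 -> D1 g -> T g.
Proof.
move=> Tc; apply: T_of_identifications
  => [{}n m {}g psi [sd g0] | {}n {}g le_n2 Dg | p {}g _ Tid].
- by split => [y|]; [apply: sd | exact: g0].
- exact/T_O1/O1_of_D1_small.
- have Tinner := T_comp4 Tc (T_proj o1) (T_proj o2) (Tid o1 o2 isT) (Tid o2 o0 isT).
  apply: T_ext (T_comp4 Tc (T_proj o0) (T_proj o1) (Tid o0 o1 isT) Tinner) _ => x.
  by rewrite [RHS]identify_cond4.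
Qed.

Lemma clone_below_D1_cases :
  exists P : forall n, boolop n -> Prop,
    [/\ P = O1 \/ P = D1 \/ P = D2 \/ P = L4,
        forall n (g : boolop n), T g <-> P n g
      & ~ T maj3 -> ~ T xor3 -> P = O1].
Proof.
have [Tm|Nm] := classic (T maj3); have [Tx|Nx] := classic (T xor3).
- exists D1; split => // [|n g]; first by right; left.
  by split; [apply: T_D1 | apply: T_D1_of_cond4; apply: cond4_of_maj3_xor3].
- exists D2; split => // [|n g]; first by right; right; left.
  split=> [Tg|]; last exact: T_D2_of_maj3.
  by split; [case: (T_D1 Tg) | apply: monotone_of_no_xor3].
- exists L4; split => // [|n g]; first by right; right; right.
  by split; [apply: affine_of_no_maj3 | apply: T_L4_of_xor3].
- exists O1; split => // [|n g]; first by left.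
  by split; [apply: O1_of_no_maj3_xor3 | apply: T_O1].
Qed.

End BooleanCloneBelowD1.

Lemma if_label_inj (A : Type) (b0 b1 : A) (s t : bool) : b0 <> b1 ->
  (if s then b1 else b0) = (if t then b1 else b0) -> s = t.
Proof. by move=> b01; case: s; case: t => // e; case: b01. Qed.

Definition tau (A : Type) n (f : op A n) : boolop n := fun x =>
  if excluded_middle_informative (forall u v : A, f (fun i => if x i then v else u) = v)
  then true else false.

Section TwoElementRestrictions.

Variables (A : Type) (F : opset A).
Hypothesis F_clone : is_clone F.
Hypothesis F_r3 : r_ge F 3.

Lemma F_minor n m (f : op A n) (psi : 'I_n -> 'I_m) :
  F f -> F (fun a => f (fun k => a (psi k))).
Proof. by have [F_proj F_comp] := F_clone; move=> Ff; apply: F_comp. Qed.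

(* On any pair b0, b1 the function f acts as the binary minor obtained by collapsing the
   variables along x, and that minor is a projection since r(F) >= 3. *)
Lemma tau_correct n (f : op A n) : F f -> forall (b0 b1 : A) (x : 'I_n -> bool),
  f (fun i => if x i then b1 else b0) = if tau f x then b1 else b0.
Proof.
move=> Ff b0 b1 x.
have [k fk] := F_r3 (isT : 2 < 3) (F_minor (fun i => if x i then ord_max else ord0) Ff).
have f_pair u v : f (fun i => if x i then v else u) = if val k == 0 then u else v.
  by rewrite -[RHS](fk (fun j => if val j == 0 then u else v)); congr f;
     apply: functional_extensionality => i; case: (x i).
rewrite /tau; case: excluded_middle_informative => [f1|f0]; first exact: f1.
rewrite f_pair; case: (val k =P 0) => // k1; case: f0 => u v.
by rewrite f_pair; move/eqP/negbTE: k1 => ->.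
Qed.

Definition tau_image : forall n, boolop n -> Prop :=
  fun n g => exists f : op A n, F f /\ tau f =1 g.

Lemma tau_image_ext n (g g' : boolop n) : tau_image g -> g =1 g' -> tau_image g'.
Proof. by move=> [f [Ff tf]] gg'; exists f; split => // x; rewrite tf gg'. Qed.

Hypothesis A_nontrivial : exists b0 b1 : A, b0 <> b1.

Lemma tau_image_proj n (i : 'I_n) : tau_image (fun x => x i).
Proof.
have [b0 [b1 b01]] := A_nontrivial; have [F_proj _] := F_clone.
exists (fun a => a i); split => [|x]; first exact: F_proj.
by apply: (if_label_inj b01); rewrite -tau_correct //; apply: F_proj.
Qed.

Lemma tau_image_comp m n (f : boolop m) (g : 'I_m -> boolop n) :
  tau_image f -> (forall j, tau_image (g j)) -> tau_image (fun x => f (fun j => g j x)).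
Proof.
have [b0 [b1 b01]] := A_nontrivial; have [_ F_comp] := F_clone.
move=> [f' [Ff' tf']] /choice [g' g'P].
have Fg' j : F (g' j) by case: (g'P j).
have Fc := F_comp _ _ _ _ Ff' Fg'.
exists (fun a => f' (fun j => g' j a)); split => // x.
apply: (if_label_inj b01); rewrite -tau_correct // -tf' -tau_correct //.
congr f'; apply: functional_extensionality => j.
by rewrite tau_correct //; case: (g'P j) => _ ->.
Qed.

Hypothesis F_conservative : conservative F.

(* Swapping the labels b0, b1 gives self-duality; conservativity gives g(0,...,0) = 0. *)
Lemma tau_image_D1 n (g : boolop n) : tau_image g -> D1 g.
Proof.
have [b0 [b1 b01]] := A_nontrivial.
move=> [f [Ff tf]]; split => [x|].
  rewrite -!tf; apply: (if_label_inj b01); rewrite -tau_correct //.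
  have -> : (fun i => if ~~ x i then b1 else b0) = (fun i => if x i then b0 else b1).
    by apply: functional_extensionality => i; case: (x i).
  by rewrite tau_correct //; case: (tau f x).
rewrite -tf; apply: (if_label_inj b01); rewrite -tau_correct //=.
by have [i ->] := F_conservative (fun _ => b0) Ff.
Qed.

Lemma tau_image_O1 r n (g : boolop n) : r_ge F r -> n < r -> tau_image g -> O1 g.
Proof.
have [b0 [b1 b01]] := A_nontrivial.
move=> F_r n_lt_r [f [Ff tf]]; have [i fi] := F_r _ f n_lt_r Ff.
by exists i => x; rewrite -tf; apply: (if_label_inj b01); rewrite -tau_correct.
Qed.

(* If a has fewer than r distinct entries, f a is computed by a minor of f of arity < r, which
   is a projection; evaluating that minor on two-valued tuples shows it picks the entry a i. *)
Lemma small_range_projection r n (f : op A n) (i : 'I_n) : r_ge F r -> F f ->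
  tau f =1 (fun x => x i) -> forall a : 'I_n -> A, small_range r a -> f a = a i.
Proof.
have [b0 [b1 b01]] := A_nontrivial.
move=> F_r Ff tfi a [s [size_s ran_a]].
have /choice [idx idxP] : forall k, exists l : 'I_(length s), List.nth l s (a i) = a k.
  move=> k; have [l [lt_l nth_l]] := List.In_nth s (a k) (a i) (ran_a k).
  by exists (Ordinal (introT ltP lt_l)).
have Fh := F_minor idx Ff; have [j hj] := F_r _ _ (introT ltP size_s) Fh.
have fa : f a = List.nth j s (a i).
  rewrite -(hj (fun l => List.nth l s (a i))); congr f.
  by apply: functional_extensionality => k; rewrite idxP.
suff idx_ij : idx i = j by rewrite fa -idx_ij idxP.
apply/eqP; apply: contra_notT b01 => idx_ij.
have := hj (fun l => if l == j then b1 else b0); rewrite eqxx /=.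
by rewrite (tau_correct Ff b0 b1 (fun k => idx k == j)) tfi (negbTE idx_ij).
Qed.

End TwoElementRestrictions.

Theorem lemma7 (A : Type) (F : opset A)
  (hA : exists x y : A, x <> y)
  (hclone : is_clone F) (hcons : conservative F)
  (hr : r_ge F 3) :
  exists P : forall n, boolop n -> Prop,
    (P = O1 \/ P = D1 \/ P = D2 \/ P = L4) /\
    exists tau : forall n, op A n -> boolop n,
      (* tau maps F into P *)
      (forall n (f : op A n), F n f -> P n (tau n f)) /\
      (* tau is surjective onto P *)
      (forall n (g : boolop n), P n g ->
         exists f : op A n, F n f /\ forall x, tau n f x = g x) /\
      (* for B = {b0,b1}, sigma^-1(0) = b0, sigma^-1(1) = b1, a = sigma^-1(x) *)
      (forall b0 b1 : A, b0 <> b1 ->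
         forall n (f : op A n), F n f ->
         forall x : 'I_n -> bool,
           f (fun i => if x i then b1 else b0)
           = (if tau n f x then b1 else b0)) /\
      (* moreover part: r(F) >= r >= 4 *)
      (forall r : nat, 4 <= r -> r_ge F r ->
         P = O1 /\
         forall n (f : op A n), F n f ->
           exists i : 'I_n, forall a : 'I_n -> A, small_range r a -> f a = a i).
Proof.
have [P [P_cases TP P_O1]] := clone_below_D1_cases (tau_image_proj hclone hr hA)
  (tau_image_comp hclone hr hA) (@tau_image_ext A F) (tau_image_D1 hclone hr hA hcons).
exists P; split => //; exists (fun n f => tau f); split; [|split; [|split]].
- by move=> n f Ff; apply/TP; exists f; split.
- by move=> n g /TP.
- by move=> b0 b1 _ n f Ff x; apply: (tau_correct hclone hr Ff).
move=> r r_ge4 F_r.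
have ternary_O1 (g : boolop 3) : tau_image F g -> O1 g.
  exact: (tau_image_O1 hclone hr hA F_r r_ge4).
have PO1 : P = O1 by apply: P_O1 => /ternary_O1; [apply: maj3_not_O1 | apply: xor3_not_O1].
split => // n f Ff.
have [i tfi] : O1 (tau f) by rewrite -PO1; apply/TP; exists f; split.
by exists i => a; apply: (small_range_projection hclone hr hA F_r Ff tfi).
Qed.
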